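(* Fix $k\ge2$, $c>0$ and $\zeta\in(0,1]$ with $\zeta(k-1)c^{k-1}<e$. Let $G=(V,E)$ be a finite $k$-uniform hypergraph with maximum degree at most $\Delta$ and let $F=F^G_{c,\zeta}$ (defined with this parameter $\Delta$). Then for all $\mathbf x,\mathbf y\in\mathbb R_{>0}^V$, $$\|\log F^2(\mathbf x)-\log F^2(\mathbf y)\|_\infty\le(1-\delta)\|\log\mathbf x-\log\mathbf y\|_\infty,\qquad \delta=1-\zeta c^{k-1}(k-1)e^{-1},$$ where $F^2=F\circ F$ and $\log$ is applied coordinatewise. In particular $F$ has a unique fixed point.
   Context: $F^G_{c,\zeta}:\mathbb R^V_{>0}\to\mathbb R^V_{>0}$ is given by $(F^G_{c,\zeta}(\mathbf x))_v=c\exp\left(-\frac{\zeta}{\Delta}\sum_{e\ni v}\prod_{u\in e\setminus\{v\}}x_u\right)$. *)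

From HB Require Import structures.
From mathcomp Require Import all_boot all_order all_algebra.
From mathcomp Require Import all_classical all_reals all_analysis.
Set Implicit Arguments. Unset Strict Implicit. Unset Printing Implicit Defensive.
Import Order.TTheory GRing.Theory Num.Theory.
Local Open Scope ring_scope.

Definition k_uniform (V : finType) (E : {set {set V}}) (k : nat) : Prop :=
  forall e, e \in E -> #|e| = k.

Definition max_degree_le (V : finType) (E : {set {set V}}) (Delta : nat) : Prop :=
  forall v : V, (#|[set e in E | v \in e]| <= Delta)%N.

Definition hyperF (R : realType) (V : finType) (E : {set {set V}}) (Delta : nat)
  (c zeta : R) (x : V -> R) : V -> R :=
  fun v => c * expR (- (zeta / Delta%:R) *
                     \sum_(e in E | v \in e) \prod_(u in e :\ v) x u).

Definition posvec (R : realType) (V : finType) (x : V -> R) : Prop :=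
  forall v, 0 < x v.

Definition logvec (R : realType) (V : finType) (x : V -> R) : V -> R :=
  fun v => ln (x v).

(* sup norm on R^V (finite V); equals 0 when V is empty *)
Definition supnorm (R : realType) (V : finType) (f : V -> R) : R :=
  \big[Num.max/0]_(v : V) `|f v|.

From HB Require Import structures.
From mathcomp Require Import all_boot all_order all_algebra.
From mathcomp Require Import all_classical all_reals all_analysis.
From mathcomp Require Import ring lra.
Import Order.TTheory GRing.Theory Num.Theory.
Import numFieldNormedType.Exports.
Local Open Scope ring_scope.

(* Write ln F(x)_v = ln c - (zeta/Delta) S_x(v), where S_x(v) sums, over the
   edges e at v, the product of x over the k-1 other vertices of e.  If
   |ln x - ln y| <= d coordinatewise, then S_x and S_y agree up to a factor
   e^((k-1)d), and so do the exponents A, B in the edge products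
   prod_(u in e\v) F(x)_u = c^(k-1) e^(-A).  Since t |-> exp(-e^t) is
   (1/e)-Lipschitz, |e^(-A) - e^(-B)| <= (k-1)d/e; summing over the at most
   Delta edges at v gives the rate zeta c^(k-1) (k-1)/e for F o F.  Banach's
   theorem in logarithmic coordinates yields a fixed point x of F o F; then F x
   is one as well, hence F x = x. *)

Section ExpBounds.
Context {R : realType}.

Lemma mulr_expRN_le (u : R) : u * expR (- u) <= (expR 1)^-1.
Proof.
have le_u := expR_ge1Dx (u - 1); rewrite addrC subrK expRD expRN in le_u.
rewrite expRN -(@ler_pM2r _ (expR u)) ?expR_gt0 // -mulrA mulVf ?gt_eqF ?expR_gt0 //.
by rewrite mulr1 mulrC.
Qed.

Lemma is_derive_expRN_expR (t : R) :
  is_derive t 1 (fun s => expR (- expR s)) (- (expR t * expR (- expR t))).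
Proof.
have dN : is_derive t 1 (fun s : R => - expR s) (- expR t).
  by apply: is_deriveN; exact: is_derive_expR.
by have := is_derive1_comp (f := expR) (is_derive_expR _) dN; rewrite mulrN mulrC.
Qed.

Lemma continuous_expRN_expR : continuous (fun s : R => expR (- expR s)).
Proof.
move=> t; apply: continuous_comp; last exact: continuous_expR.
by apply: continuous_comp; [exact: continuous_expR | exact: continuousN].
Qed.

Lemma expRN_expR_lipschitz (s t : R) :
  `|expR (- expR s) - expR (- expR t)| <= `|s - t| / expR 1.
Proof.
wlog le_st : s t / s <= t.
  move=> W; have [/W //|/ltW /W] := leP s t.
  by rewrite distrC [`|t - s|]distrC.
have [r _ mvt] := MVT_segment le_st (fun r _ => is_derive_expRN_expR r)
  (continuous_subspaceT continuous_expRN_expR).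
rewrite distrC mvt normrM normrN [`|s - t|]distrC mulrC.
rewrite [`|t - s|]ger0_norm ?subr_ge0 // ger0_norm ?mulr_ge0 ?expR_ge0 //.
by apply: ler_wpM2l; [rewrite subr_ge0 | exact: mulr_expRN_le].
Qed.

Lemma dist_expRN_le (A B m : R) : 0 <= A -> 0 <= B -> 0 <= m ->
  B <= expR m * A -> A <= expR m * B -> `|expR (- A) - expR (- B)| <= m / expR 1.
Proof.
move=> A_ge0 B_ge0 m_ge0 le_BA le_AB.
have [A0|A_neq0] := eqVneq A 0.
  have B0 : B = 0 by apply/le_anti; rewrite B_ge0 andbT -(mulr0 (expR m)) -A0.
  by rewrite A0 B0 subrr normr0 divr_ge0 ?expR_ge0.
have A_gt0 : 0 < A by rewrite lt_def A_neq0.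
have B_gt0 : 0 < B.
  rewrite lt_def B_ge0 andbT; apply: contra_neq A_neq0 => B0.
  by apply/le_anti; rewrite A_ge0 andbT -(mulr0 (expR m)) -B0.
have ln_le X Y : 0 < X -> 0 < Y -> Y <= expR m * X -> ln Y - ln X <= m.
  move=> X_gt0 Y_gt0 le_YX; rewrite lerBlDr -[m]expRK -lnM ?posrE ?expR_gt0 //.
  by rewrite ler_ln ?posrE ?mulr_gt0 ?expR_gt0.
rewrite -[A](lnK A_gt0) -[B](lnK B_gt0).
apply: le_trans (expRN_expR_lipschitz _ _) _.
rewrite ler_wpM2r ?invr_ge0 ?expR_ge0 // ler_norml.
by have := ln_le _ _ A_gt0 B_gt0 le_BA; have := ln_le _ _ B_gt0 A_gt0 le_AB; lra.
Qed.

Lemma ler_expR_mul_of_ln_dist (x y d : R) : 0 < x -> 0 < y ->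
  `|ln x - ln y| <= d -> y <= expR d * x.
Proof.
move=> x_gt0 y_gt0; rewrite ler_norml => /andP[le_yx _].
by rewrite -(lnK x_gt0) -(lnK y_gt0) -expRD ler_expR; lra.
Qed.

Lemma ler_prod_expR_mul (I : finType) (A : {set I}) (x y : I -> R) (d : R) :
  (forall i, i \in A -> 0 <= y i <= expR d * x i) ->
  \prod_(i in A) y i <= expR (#|A|%:R * d) * \prod_(i in A) x i.
Proof.
by move=> le_yx; rewrite expRM_natl -prodr_const -big_split; exact: ler_prod.
Qed.

End ExpBounds.

Section Supnorm.
Context {R : realType} {V : finType}.

Lemma supnorm_ge0 (f : V -> R) : 0 <= supnorm f.
Proof.
by apply: (big_ind (fun r => 0 <= r)) => // r s r_ge0 s_ge0; rewrite le_max r_ge0.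
Qed.

Lemma normr_le_supnorm (f : V -> R) v : `|f v| <= supnorm f.
Proof. exact: le_bigmax. Qed.

Lemma supnorm_le (f : V -> R) b : 0 <= b -> (forall v, `|f v| <= b) -> supnorm f <= b.
Proof. by move=> b_ge0 le_fb; apply/bigmax_leP. Qed.

End Supnorm.

Lemma normr_mxentry_le {K : realDomainType} {m n} (A : 'M[K]_(m, n)) i j :
  `|A i j| <= `|A|.
Proof.
by rewrite [leRHS]/Num.norm /= mx_normrE; apply/bigmax_geP; right; exists (i, j).
Qed.

Lemma mx_normr_le {K : realDomainType} {m n} (A : 'M[K]_(m, n)) b : 0 <= b ->
  (forall i j, `|A i j| <= b) -> `|A| <= b.
Proof.
move=> b_ge0 le_Ab; rewrite [leLHS]/Num.norm /= mx_normrE.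
by apply/bigmax_leP; split=> // -[].
Qed.

(* 'rV[R]_n carries both a normed module and a complete structure, but not
   their join, which banach_fixed_point requires; the alias gets it. *)
Definition rvec (R : realType) (n : nat) := 'rV[R]_n.
HB.instance Definition _ (R : realType) (n : nat) :=
  NormedModule.copy (rvec R n) 'rV[R]_n.
HB.instance Definition _ (R : realType) (n : nat) :=
  Complete.copy (rvec R n) 'rV[R]_n.

Section HypergraphMap.
Variables (R : realType) (V : finType) (E : {set {set V}}).
Variables (Delta k : nat) (c zeta : R).
Hypotheses (c_gt0 : 0 < c) (zeta_gt0 : 0 < zeta) (E_uniform : k_uniform E k).

Local Notation F := (hyperF E Delta c zeta).

Definition hyper_load (x : V -> R) (v : V) : R :=
  \sum_(e in E | v \in e) \prod_(u in e :\ v) x u.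

Lemma hyper_load_ge0 x v : posvec x -> 0 <= hyper_load x v.
Proof. by move=> px; apply: sumr_ge0 => e _; apply: prodr_ge0 => u _; exact: ltW. Qed.

Lemma hyperF_pos x : posvec (F x).
Proof. by move=> v; rewrite mulr_gt0 ?expR_gt0. Qed.

Lemma ln_hyperF x v : ln (F x v) = ln c - zeta / Delta%:R * hyper_load x v.
Proof. by rewrite lnM ?posrE ?expR_gt0 // expRK mulNr. Qed.

Lemma card_edgeD1 {e v} : e \in E -> v \in e -> #|e :\ v| = k.-1.
Proof. by move=> eE ve; have := cardsD1 v e; rewrite ve E_uniform // add1n => ->. Qed.

Lemma hyper_load_le (x y : V -> R) (d : R) v : posvec x -> posvec y ->
  (forall w, `|ln (x w) - ln (y w)| <= d) ->
  hyper_load y v <= expR ((k.-1)%:R * d) * hyper_load x v.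
Proof.
move=> px py dxy; rewrite mulr_sumr; apply: ler_sum => e /andP[eE ve].
rewrite -(card_edgeD1 eE ve); apply: ler_prod_expR_mul => u _.
by rewrite ltW //= ler_expR_mul_of_ln_dist.
Qed.

Lemma prod_hyperF x e v : e \in E -> v \in e ->
  \prod_(u in e :\ v) F x u
  = c ^+ k.-1 * expR (- \sum_(u in e :\ v) zeta / Delta%:R * hyper_load x u).
Proof.
move=> eE ve; rewrite big_split /= prodr_const card_edgeD1 // -sumrN expR_sum.
by congr (_ * _); apply: eq_bigr => u _; rewrite mulNr.
Qed.

Lemma dist_prod_hyperF (x y : V -> R) (d : R) e v : posvec x -> posvec y ->
  (forall w, `|ln (x w) - ln (y w)| <= d) -> e \in E -> v \in e ->
  `|\prod_(u in e :\ v) F y u - \prod_(u in e :\ v) F x u|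
  <= c ^+ k.-1 * ((k.-1)%:R * d / expR 1).
Proof.
move=> px py dxy eE ve.
have d_ge0 : 0 <= d := le_trans (normr_ge0 _) (dxy v).
have dyx w : `|ln (y w) - ln (x w)| <= d by rewrite distrC.
have a_ge0 : 0 <= zeta / Delta%:R by rewrite divr_ge0 ?ler0n ?(ltW zeta_gt0).
rewrite !prod_hyperF // -mulrBr normrM ger0_norm ?exprn_ge0 ?(ltW c_gt0) //.
rewrite ler_pM2l ?exprn_gt0 //; apply: dist_expRN_le.
- by apply: sumr_ge0 => u _; rewrite mulr_ge0 ?hyper_load_ge0.
- by apply: sumr_ge0 => u _; rewrite mulr_ge0 ?hyper_load_ge0.
- by rewrite mulr_ge0 ?ler0n.
- rewrite mulr_sumr; apply: ler_sum => u _; rewrite mulrCA ler_wpM2l //.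
  exact: hyper_load_le.
- rewrite mulr_sumr; apply: ler_sum => u _; rewrite mulrCA ler_wpM2l //.
  exact: hyper_load_le.
Qed.

Hypotheses (E_degree : max_degree_le E Delta) (Delta_gt0 : (0 < Delta)%N).

Definition hyper_rate := zeta * c ^+ k.-1 * (k.-1)%:R / expR 1.

Lemma hyper_rate_ge0 : 0 <= hyper_rate.
Proof. by rewrite divr_ge0 ?expR_ge0 // !mulr_ge0 ?exprn_ge0 ?ler0n // ltW. Qed.

Lemma dist_ln_hyperF2 (x y : V -> R) (d : R) v : posvec x -> posvec y ->
  (forall w, `|ln (x w) - ln (y w)| <= d) ->
  `|ln (F (F x) v) - ln (F (F y) v)| <= hyper_rate * d.
Proof.
move=> px py dxy.
set b := c ^+ k.-1 * ((k.-1)%:R * d / expR 1).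
have d_ge0 : 0 <= d := le_trans (normr_ge0 _) (dxy v).
have b_ge0 : 0 <= b.
  by rewrite mulr_ge0 ?exprn_ge0 ?divr_ge0 ?mulr_ge0 ?expR_ge0 ?ler0n ?(ltW c_gt0).
have a_ge0 : 0 <= zeta / Delta%:R by rewrite divr_ge0 ?ler0n ?(ltW zeta_gt0).
have edges_le : `|hyper_load (F y) v - hyper_load (F x) v|
                <= b *+ #|[set e in E | v \in e]|.
  rewrite -sumrB (eq_bigl (fun e => e \in [set e in E | v \in e])); last first.
    by move=> e; rewrite inE.
  rewrite -sumr_const; apply: le_trans (ler_norm_sum _ _ _) (ler_sum _ _) => e.
  by rewrite inE => /andP[eE ve]; exact: dist_prod_hyperF.
rewrite !ln_hyperF opprB addrC addrA subrK -mulrBr normrM ger0_norm //.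
apply: le_trans (ler_wpM2l a_ge0 (le_trans edges_le (ler_wpMn2l b_ge0 (E_degree v)))) _.
suff -> : zeta / Delta%:R * (b *+ Delta) = hyper_rate * d by [].
rewrite /b /hyper_rate -mulr_natr; field.
by rewrite gt_eqF ?expR_gt0 ?pnatr_eq0 -?lt0n.
Qed.

Lemma supnorm_ln_hyperF2_le x y : posvec x -> posvec y ->
  supnorm (fun v => logvec (F (F x)) v - logvec (F (F y)) v)
  <= hyper_rate * supnorm (fun v => logvec x v - logvec y v).
Proof.
move=> px py; apply: supnorm_le => [|v].
  by rewrite mulr_ge0 ?hyper_rate_ge0 ?supnorm_ge0.
apply: dist_ln_hyperF2 => // w.
exact: (normr_le_supnorm (fun w => logvec x w - logvec y w) w).
Qed.

Hypothesis hyper_rate_lt1 : hyper_rate < 1.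

Lemma hyperF2_fixpoint_unique x y : posvec x -> posvec y ->
  F (F x) = x -> F (F y) = y -> x = y.
Proof.
move=> px py Fx Fy; have := supnorm_ln_hyperF2_le x y px py; rewrite Fx Fy.
set D := supnorm _ => le_D.
have gap : 0 < 1 - hyper_rate by rewrite subr_gt0.
have D0 : D <= 0 by rewrite -(pmulr_rle0 _ gap) mulrBl mul1r subr_le0.
apply: funext => v; rewrite -(lnK (px v)) -(lnK (py v)); congr expR; apply/eqP.
by rewrite -subr_eq0 -normr_le0; exact: le_trans (normr_le_supnorm _ v) D0.
Qed.

Definition exp_rvec (t : rvec R #|V|) : V -> R :=
  fun v => expR (t ord0 (enum_rank v)).

Definition ln_hyperF2_rvec (t : rvec R #|V|) : rvec R #|V| :=
  \row_i ln (F (F (exp_rvec t)) (enum_val i)).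

Lemma ln_hyperF2_rvec_lipschitz t s :
  `|ln_hyperF2_rvec t - ln_hyperF2_rvec s| <= hyper_rate * `|t - s|.
Proof.
apply: mx_normr_le => [|i j]; first by rewrite mulr_ge0 ?hyper_rate_ge0.
rewrite !mxE; apply: dist_ln_hyperF2 => [v|v|w]; rewrite /exp_rvec ?expR_gt0 // !expRK.
by have := normr_mxentry_le (t - s) ord0 (enum_rank w); rewrite !mxE.
Qed.

Lemma hyperF2_fixpoint_exists : exists2 x, posvec x & F (F x) = x.
Proof.
have rate_ge0 := hyper_rate_ge0.
have contr : is_contraction (totalfun_ setT ln_hyperF2_rvec
                              : {fun [set: rvec R #|V|] >-> [set: rvec R #|V|]}).
  by exists (NngNum rate_ge0); split=> // -[t s] _; exact: ln_hyperF2_rvec_lipschitz.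
have [t _ tE] := banach_fixed_point contr closedT (ex_intro _ 0 I).
exists (exp_rvec t) => [v|]; first exact: expR_gt0.
apply: funext => v; rewrite /exp_rvec [in RHS]tE /= mxE enum_rankK.
by rewrite lnK // posrE hyperF_pos.
Qed.

Lemma hyperF_exists_unique_fixpoint : exists x, posvec x /\ F x = x /\
  forall y, posvec y -> F y = y -> y = x.
Proof.
have [x px Fx] := hyperF2_fixpoint_exists.
exists x; split=> //; split.
  by apply: hyperF2_fixpoint_unique; rewrite ?Fx //; exact: hyperF_pos.
by move=> y py Fy; apply: hyperF2_fixpoint_unique; rewrite ?Fy.
Qed.

End HypergraphMap.

Theorem mainTheorem12 (R : realType) (k : nat) (c zeta : R)
  (V : finType) (E : {set {set V}}) (Delta : nat) :
  (2 <= k)%N -> 0 < c -> 0 < zeta -> zeta <= 1 ->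
  zeta * (k.-1)%:R * c ^+ k.-1 < expR 1 ->
  k_uniform E k -> max_degree_le E Delta -> (0 < Delta)%N ->
  let F := hyperF E Delta c zeta in
  let delta := 1 - zeta * c ^+ k.-1 * (k.-1)%:R / expR 1 in
  (forall x y : V -> R, posvec x -> posvec y ->
     supnorm (fun v => logvec (F (F x)) v - logvec (F (F y)) v)
     <= (1 - delta) * supnorm (fun v => logvec x v - logvec y v))
  /\ (exists x : V -> R, posvec x /\ F x = x /\
        forall y : V -> R, posvec y -> F y = y -> y = x).
Proof.
move=> _ c_gt0 zeta_gt0 _ small E_uniform E_degree Delta_gt0 F delta.
have -> : 1 - delta = hyper_rate R k c zeta by rewrite /delta /hyper_rate; ring.
have rate_lt1 : hyper_rate R k c zeta < 1.
  by rewrite /hyper_rate ltr_pdivrMr ?expR_gt0 // mul1r mulrAC.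
split; first exact: supnorm_ln_hyperF2_le.
exact: hyperF_exists_unique_fixpoint rate_lt1.
Qed.
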